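(* Let $\mathbf{u}=(u_1,u_2)\in\mathbb{R}[x_1,x_2]_d^2$, let $c=\gcd(u_1,u_2)$ and $u_i'=u_i/c$, and suppose that $c$ and $u_1'^2+u_2'^2$ are coprime (equivalently, in the decomposition $(u_1,u_2)=(u_1'gh,u_2'gh)$ with $\gcd(u_1,u_2)=gh$, $\gcd(u_1'^2+u_2'^2,g)=1$ and every root of $h$ a root of $u_1'^2+u_2'^2$, one has $h=1$). Then for every $p\in\Sigma[x_1,x_2]_{2d}$, $$p\in\operatorname{im}(\mathcal{A}_{\mathbf{u}})+\operatorname{cone}\big(\sigma(\ker(\mathcal{A}_{\mathbf{u}}))\big).$$
   Context: $\mathbb{R}[x_1,x_2]_n$ denotes the space of real binary forms (homogeneous polynomials in $x_1,x_2$) of degree $n$, and $\Sigma[x_1,x_2]_{2d}$ the cone of sums of squares of binary forms of degree $d$. $\gcd$ of binary forms is the common divisor of highest degree (unique up to scalar); coprime means $\gcd$ is constant. $\mathcal{A}_{\mathbf{u}}:\mathbb{R}[x_1,x_2]_d^2\to\mathbb{R}[x_1,x_2]_{2d}$ is $(v_1,v_2)\mapsto u_1v_1+u_2v_2$, $\sigma(v_1,v_2)=v_1^2+v_2^2$, and $\operatorname{cone}(S)$ is the set of nonnegative combinations of elements of $S$. *)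

From HB Require Import structures.
From mathcomp Require Import all_boot all_order all_algebra.
From mathcomp Require Import reals.
From mathcomp.multinomials Require Import mpoly.
Set Implicit Arguments. Unset Strict Implicit. Unset Printing Implicit Defensive.
Import Order.TTheory GRing.Theory Num.Theory.
Local Open Scope ring_scope.

Definition mdivides (R : realType) (a b : {mpoly R[2]}) : Prop :=
  exists r : {mpoly R[2]}, b = a * r.

Definition is_mgcd (R : realType) (c a b : {mpoly R[2]}) : Prop :=
  [/\ mdivides c a, mdivides c b &
      forall q : {mpoly R[2]}, mdivides q a -> mdivides q b -> mdivides q c].

Definition mcoprime (R : realType) (a b : {mpoly R[2]}) : Prop :=
  forall q : {mpoly R[2]}, mdivides q a -> mdivides q b ->
    exists k : R, q = k%:MP.

Definition sos_form (R : realType) (d : nat) (p : {mpoly R[2]}) : Prop :=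
  exists s : seq {mpoly R[2]},
    (forall q, q \in s -> q \is d.-homog) /\ p = \sum_(q <- s) q ^+ 2.

Definition A_u (R : realType) (u1 u2 v1 v2 : {mpoly R[2]}) : {mpoly R[2]} :=
  u1 * v1 + u2 * v2.

Definition in_im_A (R : realType) (d : nat) (u1 u2 p : {mpoly R[2]}) : Prop :=
  exists v1 v2 : {mpoly R[2]},
    [/\ v1 \is d.-homog, v2 \is d.-homog & p = A_u u1 u2 v1 v2].

Definition in_sigma_ker (R : realType) (d : nat) (u1 u2 p : {mpoly R[2]}) : Prop :=
  exists v1 v2 : {mpoly R[2]},
    [/\ v1 \is d.-homog, v2 \is d.-homog, A_u u1 u2 v1 v2 = 0 &
        p = v1 ^+ 2 + v2 ^+ 2].

Definition in_cone (R : realType) (S : {mpoly R[2]} -> Prop) (p : {mpoly R[2]}) : Prop :=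
  exists s : seq (R * {mpoly R[2]}),
    (forall x, x \in s -> 0 <= x.1 /\ S x.2) /\
    p = \sum_(x <- s) x.1 *: x.2.

From HB Require Import structures.
From mathcomp Require Import all_boot all_order all_algebra.
From mathcomp Require Import reals.
From mathcomp.multinomials Require Import mpoly.
From mathcomp Require Import zify ring.
Set Implicit Arguments. Unset Strict Implicit. Unset Printing Implicit Defensive.
Import Order.TTheory GRing.Theory Num.Theory.
Local Open Scope ring_scope.

(* Dehomogenizing at x2 = 1 identifies binary forms of degree n with polynomials
   of degree at most n, compatibly with products and divisibility.  Write C, U1,
   U2, Q for the images of c, u1', u2' and of a form q of degree d, and
   S = U1^2 + U2^2.  The gcd hypothesis makes U1 and U2 coprime, one of them of
   full degree (x2 cannot divide both u1' and u2'), so S has full degree as well;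
   the hypothesis on c makes C and S coprime.  Bezout with degree bounds gives
   Q U_i = C X_i + S T_i with deg T_i <= deg c.  Expanding (S T_i)^2 shows that
   S (T1^2 + T2^2) - Q^2 is a multiple C Z with deg Z <= d + deg u1', and a second
   bounded Bezout writes Z = U1 A + U2 B.  Homogenizing,
   q^2 = - u1 a - u2 b + sum_i ((t_i u2')^2 + (t_i u1')^2), and each
   (t_i u2', - t_i u1') lies in ker A_u.  Sums of squares follow by additivity. *)

Lemma lift0_max : lift ord0 ord0 = ord_max :> 'I_2.
Proof. exact: val_inj. Qed.

Lemma mdeg2 (m : 'X_{1..2}) : mdeg m = (m ord0 + m ord_max)%N.
Proof. by rewrite mdegE big_ord_recl big_ord1 lift0_max. Qed.

Section Dehomogenization.
Variable R : comNzRingType.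

Lemma mpolyX2 (m : 'X_{1..2}) :
  'X_[m] = 'X_ord0 ^+ m ord0 * 'X_ord_max ^+ m ord_max :> {mpoly R[2]}.
Proof. by rewrite [LHS]mpolyXE_id big_ord_recl big_ord1 lift0_max. Qed.

Definition dehomog_var (i : 'I_2) : {poly R} := if i == ord0 then 'X else 1.

Definition dehomog (f : {mpoly R[2]}) : {poly R} := mmap polyC dehomog_var f.

HB.instance Definition _ := GRing.RMorphism.copy dehomog (mmap polyC dehomog_var).

Lemma dehomogC a : dehomog a%:MP = a%:P.
Proof. exact: mmapC. Qed.

Lemma dehomogX0 : dehomog 'X_ord0 = 'X.
Proof. by rewrite /dehomog mmapX mmap1U. Qed.

Lemma dehomogX1 : dehomog 'X_ord_max = 1.
Proof. by rewrite /dehomog mmapX mmap1U. Qed.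

Lemma dehomogXm (m : 'X_{1..2}) : dehomog 'X_[m] = 'X^(m ord0).
Proof. by rewrite mpolyX2 rmorphM !rmorphXn /= dehomogX0 dehomogX1 expr1n mulr1. Qed.

Lemma dehomogZ a f : dehomog (a *: f) = a *: dehomog f.
Proof. by rewrite /dehomog mmapZ mul_polyC. Qed.

Definition homogenize (n : nat) (P : {poly R}) : {mpoly R[2]} :=
  \sum_(i < n.+1) P`_i *: ('X_ord0 ^+ i * 'X_ord_max ^+ (n - i)).

Fact homogenize_is_linear n : linear (homogenize n).
Proof.
move=> a P Q; rewrite /homogenize scaler_sumr -big_split /=.
by apply: eq_bigr => i _; rewrite coefD coefZ scalerDl scalerA.
Qed.

HB.instance Definition _ n :=
  GRing.isLinear.Build R {poly R} {mpoly R[2]} _ (homogenize n)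
    (homogenize_is_linear n).

Lemma dhomog_homogenize n P : homogenize n P \is n.-homog.
Proof.
apply: rpred_sum => i _; apply: dhomogZ.
have X_homog (j : 'I_2) : ('X_j : {mpoly R[2]}) \is 1.-homog.
  by rewrite dhomogX; apply/eqP; apply: mdeg1.
have := dhomogM (dhomogMn i (X_homog ord0)) (dhomogMn (n - i) (X_homog ord_max)).
by rewrite !mul1n subnKC // -ltnS.
Qed.

Lemma homogenizeK n (P : {poly R}) :
  (size P <= n.+1)%N -> dehomog (homogenize n P) = P.
Proof.
move=> sP; transitivity (\poly_(i < n.+1) P`_i); last first.
  apply/polyP => j; rewrite coef_poly; case: ltnP => // lt_nj.
  by rewrite nth_default // (leq_trans sP lt_nj).
rewrite /homogenize raddf_sum poly_def; apply: eq_bigr => i _.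
by rewrite /= dehomogZ rmorphM !rmorphXn /= dehomogX0 dehomogX1 expr1n mulr1.
Qed.

Lemma homogenizeXn n j :
  (j <= n)%N -> homogenize n 'X^j = 'X_ord0 ^+ j * 'X_ord_max ^+ (n - j).
Proof.
move=> le_jn; rewrite /homogenize (bigD1 (Ordinal (le_jn : (j < n.+1)%N))) //=.
rewrite coefXn eqxx scale1r big1 ?addr0 // => i /eqP ne_ij.
by rewrite coefXn; case: eqP => [eq_ij|_]; [case: ne_ij; apply: val_inj|rewrite scale0r].
Qed.

Lemma dehomogK n f : f \is n.-homog -> homogenize n (dehomog f) = f.
Proof.
move=> /dhomogP f_homog.
transitivity (\sum_(m <- msupp f) f@_m *: 'X_[m] : {mpoly R[2]}); last first.
  exact/esym/mpolyE.
have -> : dehomog f = \sum_(m <- msupp f) dehomog (f@_m *: 'X_[m]).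
  by rewrite -raddf_sum -mpolyE.
rewrite raddf_sum !big_seq; apply: eq_bigr => m /f_homog m_deg.
have {m_deg}-> : n = (m ord0 + m ord_max)%N by rewrite -m_deg; apply: mdeg2.
rewrite /= dehomogZ dehomogXm linearZ /= homogenizeXn ?leq_addr //.
by rewrite (mpolyX2 m) addKn.
Qed.

Lemma size_dehomog n f : f \is n.-homog -> (size (dehomog f) <= n.+1)%N.
Proof.
move=> f_homog; rewrite -(dehomogK f_homog) /homogenize raddf_sum /=.
rewrite (leq_trans (size_sum _ _ _)) //; apply/bigmax_leqP => i _.
rewrite /= dehomogZ rmorphM !rmorphXn /= dehomogX0 dehomogX1 expr1n mulr1.
by rewrite (leq_trans (size_scale_leq _ _)) // size_polyXn.
Qed.

Lemma dehomog_inj n : {in n.-homog &, injective dehomog}.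
Proof. by move=> f g f_homog g_homog eq_fg; rewrite -(dehomogK f_homog) eq_fg dehomogK. Qed.

Lemma dehomog_eq0 n f : f \is n.-homog -> (dehomog f == 0) = (f == 0).
Proof.
move=> f_homog; apply/eqP/eqP => [f0|->]; last exact: rmorph0.
by rewrite -(dehomogK f_homog) f0 linear0.
Qed.

Lemma homogenizeM a b (P Q : {poly R}) :
    (size P <= a.+1)%N -> (size Q <= b.+1)%N ->
  homogenize (a + b) (P * Q) = homogenize a P * homogenize b Q.
Proof.
move=> sP sQ; apply: (@dehomog_inj (a + b)).
- exact: dhomog_homogenize.
- by apply: dhomogM; apply: dhomog_homogenize.
rewrite rmorphM /= !homogenizeK //; apply: leq_trans (size_polyMleq _ _) _.
by move: sP sQ; lia.
Qed.

End Dehomogenization.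

Lemma monomial_factor (R : idomainType) d (a b : {poly R}) (y : R) :
  y != 0 -> a * b = y%:P * 'X^d -> exists z i, a = z%:P * 'X^i.
Proof.
elim: d a b => [|d IHd] a b y_neq0 eq_ab.
  have : size (a * b) == 1%N by rewrite eq_ab mulr1 size_polyC y_neq0.
  rewrite size_mul_eq1 => /andP[/size_poly1P[z _ ->] _].
  by exists z, 0%N; rewrite mulr1.
have : root (a * b) 0 by rewrite /root eq_ab hornerM hornerXn expr0n mulr0.
have cancelX (p q : {poly R}) : p * 'X = q * 'X -> p = q by apply: mulIf; rewrite polyX_eq0.
rewrite rootM => /orP[] /factor_theorem[c eq_c]; rewrite subr0 in eq_c.
  have [|z [i eq_z]] := IHd c b y_neq0.
    by apply: cancelX; rewrite mulrAC -eq_c eq_ab exprSr mulrA.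
  by exists z, i.+1; rewrite eq_c eq_z exprSr mulrA.
apply: (IHd a c y_neq0); apply: cancelX.
by rewrite -mulrA -eq_c eq_ab exprSr mulrA.
Qed.

Section HomogeneousFactors.
Variables (n : nat) (R : idomainType).
Implicit Types (c f p q v w : {mpoly R[n]}).

Definition grade_var (i : 'I_n) : {poly {mpoly R[n]}} := ('X_i)%:P * 'X.

Definition grade f : {poly {mpoly R[n]}} := mmap (polyC \o @mpolyC n R) grade_var f.

HB.instance Definition _ :=
  GRing.RMorphism.copy grade (mmap (polyC \o @mpolyC n R) grade_var).

Lemma gradeX m : grade 'X_[m] = ('X_[m])%:P * 'X^(mdeg m).
Proof.
rewrite /grade mmapX /mmap1 /grade_var.
under eq_bigr do rewrite exprMn -rmorphXn.
by rewrite big_split /= -rmorph_prod prodrXr -mdegE mpolyXE_id.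
Qed.

Lemma coef_grade f j : (grade f)`_j = pihomog mdeg j f.
Proof.
have -> : grade f = \sum_(m <- msupp f) grade (f@_m *: 'X_[m]).
  by rewrite -raddf_sum -mpolyE.
rewrite coef_sum pihomogE [RHS]big_mkcond /=; apply: eq_bigr => m _.
rewrite /grade mmapZ -/(grade _) gradeX /= mulrA -rmorphM /= coefCM coefXn.
by rewrite -mul_mpolyC eq_sym; case: eqP; rewrite ?mulr1 ?mulr0.
Qed.

Lemma grade_dhomog d f : f \is d.-homog -> grade f = f%:P * 'X^d.
Proof.
move=> f_homog; apply/polyP => j; rewrite coef_grade coefCM coefXn.
have [->|ne_jd] := eqVneq j d; first by rewrite mulr1 pihomog_dE.
by rewrite mulr0 (pihomog_ne0 _ f_homog) // eq_sym.
Qed.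

Lemma dhomog_grade d f y : grade f = y%:P * 'X^d -> f \is d.-homog.
Proof.
move=> eq_f; rewrite (pihomog_partitionE (leqnn (msize f))).
apply: rpred_sum => j _; have [->|ne_jd] := eqVneq (j : nat) d.
  exact: pihomogP.
by rewrite -coef_grade eq_f coefCM coefXn (negbTE ne_jd) mulr0 dhomog0.
Qed.

Lemma homog_factor p q d :
  p * q != 0 -> p * q \is d.-homog -> exists k, p \is k.-homog.
Proof.
move=> pq_neq0 /grade_dhomog; rewrite rmorphM /= => /(monomial_factor pq_neq0).
by case=> z [k /dhomog_grade p_homog]; exists k.
Qed.

Lemma dhomog_cofactor c v k e :
  c != 0 -> c \is k.-homog -> c * v \is (k + e).-homog -> v \is e.-homog.
Proof.
move=> c_neq0 c_homog cv_homog.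
have [->|v_neq0] := eqVneq v 0; first exact: dhomog0.
have cv_neq0 : c * v != 0 by rewrite mulf_neq0.
have [e' v_homog] : exists e', v \is e'.-homog.
  by apply: (@homog_factor v c (k + e)); rewrite mulrC.
suff -> : e = e' by [].
apply/eqP; rewrite -(eqn_add2l k); apply/eqP.
exact/(dhomog_uniq cv_neq0 cv_homog)/dhomogM.
Qed.

Lemma dhomog_split c v w d :
    c * v != 0 -> c * v \is d.-homog -> c * w \is d.-homog ->
  exists k e, [/\ c \is k.-homog, v \is e.-homog, w \is e.-homog & d = (k + e)%N].
Proof.
move=> cv_neq0 cv_homog cw_homog.
have c_neq0 : c != 0 by apply: contraNneq cv_neq0 => ->; rewrite mul0r.
have [k c_homog] := homog_factor cv_neq0 cv_homog.
have [e v_homog] : exists e, v \is e.-homog.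
  by apply: (@homog_factor v c d); rewrite mulrC.
have d_eq : d = (k + e)%N by apply: dhomog_uniq cv_neq0 cv_homog (dhomogM _ _).
exists k, e; split => //; apply: (dhomog_cofactor c_neq0 c_homog).
by rewrite -d_eq.
Qed.

End HomogeneousFactors.

Lemma mpolyX_neqC n (R : nzRingType) (i : 'I_n) (k : R) :
  ('X_i : {mpoly R[n]}) <> k%:MP.
Proof.
by move=> /(congr1 (fun p => msize p)); rewrite msizeC msizeX mdeg1; case: (k != 0).
Qed.

Lemma mpoly_unit_const n (R : idomainType) (p r : {mpoly R[n]}) :
  p * r = 1 -> exists k, p = k%:MP.
Proof.
move=> pr1.
have [p0|p_neq0] := eqVneq p 0; first by move/eqP: pr1; rewrite p0 mul0r eq_sym oner_eq0.
have [r0|r_neq0] := eqVneq r 0; first by move/eqP: pr1; rewrite r0 mulr0 eq_sym oner_eq0.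
have r_gt0 : (0 < msize r)%N by rewrite lt0n msize_poly_eq0.
exists p@_0; apply: msize1_polyC.
by have := msizeM p_neq0 r_neq0; rewrite pr1 msize1; set sr := msize r; lia.
Qed.

Section Divisors.
Variable R : realType.
Implicit Types (a b c f g v w : {mpoly R[2]}) (G : {poly R}).

Lemma mdivides_homogenize n f G :
  f \is n.-homog -> G %| dehomog f -> mdivides (homogenize (size G).-1 G) f.
Proof.
move=> f_homog dvd_Gf.
have [->|f_neq0] := eqVneq f 0; first by exists 0; rewrite mulr0.
have Gf_neq0 : dehomog f != 0 by rewrite (dehomog_eq0 f_homog).
have G_neq0 : G != 0 by apply: contraNneq Gf_neq0 => G0; rewrite -dvd0p -G0.
have sf := size_dehomog f_homog.
have le_Gn : ((size G).-1 <= n)%N.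
  by rewrite -ltnS prednK ?size_poly_gt0 // (leq_trans (dvdp_leq Gf_neq0 dvd_Gf)).
exists (homogenize (n - (size G).-1) (dehomog f %/ G)).
rewrite -homogenizeM ?leqSpred //; last first.
  by rewrite size_divp // -subSn //; apply: leq_sub2r.
by rewrite subnKC // divpKC // dehomogK.
Qed.

Lemma homogenize11 : homogenize 1 1 = 'X_ord_max :> {mpoly R[2]}.
Proof. by rewrite -(expr0 'X) homogenizeXn // expr0 mul1r subn0 expr1. Qed.

Lemma mdivides_Xlast n f :
  f \is n.-homog -> (size (dehomog f) <= n)%N -> mdivides 'X_ord_max f.
Proof.
case: n => [|n] f_homog sf.
  by exists 0; move: sf; rewrite leqn0 size_poly_eq0 (dehomog_eq0 f_homog) mulr0 => /eqP.
exists (homogenize n (dehomog f)).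
rewrite -{1}(dehomogK f_homog) -[n.+1]/(1 + n)%N -[dehomog f in LHS]mul1r.
by rewrite homogenizeM ?size_poly1 // homogenize11.
Qed.

Lemma mcoprime_neq0 a b : mcoprime a b -> (a != 0) || (b != 0).
Proof.
move=> cop; apply: contraT; rewrite negb_or !negbK => /andP[/eqP a0 /eqP b0].
have [k /mpolyX_neqC []] : exists k : R, 'X_ord0 = k%:MP :> {mpoly R[2]}.
  by apply: cop; exists 0; rewrite ?a0 ?b0 mulr0.
Qed.

Lemma coprimep_dehomog m n a b :
  a \is m.-homog -> b \is n.-homog -> mcoprime a b -> coprimep (dehomog a) (dehomog b).
Proof.
move=> a_homog b_homog cop; rewrite /coprimep; set G := gcdp _ _.
have G_neq0 : G != 0.
  rewrite gcdp_eq0 (dehomog_eq0 a_homog) (dehomog_eq0 b_homog) negb_and.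
  exact: mcoprime_neq0.
have [k eq_k] := cop _ (mdivides_homogenize a_homog (dvdp_gcdl _ _))
  (mdivides_homogenize b_homog (dvdp_gcdr _ _)).
have := homogenizeK (leqSpred (size G)); rewrite eq_k dehomogC => G_eq.
by move: G_neq0; rewrite -G_eq size_polyC polyC_eq0 => ->.
Qed.

Lemma mgcd_cofactors_coprime c v w :
  c != 0 -> is_mgcd c (c * v) (c * w) -> mcoprime v w.
Proof.
move=> c_neq0 [_ _ gcd_c] g [r1 eq_v] [r2 eq_w].
have [r eq_c] : mdivides (g * c) c.
  by apply: gcd_c; [exists r1; rewrite eq_v | exists r2; rewrite eq_w]; ring.
apply: (@mpoly_unit_const _ _ g r); apply: (mulfI c_neq0).
by rewrite mulr1 {2}eq_c; ring.
Qed.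

End Divisors.

Section PolySizes.
Variable R : nzRingType.
Implicit Types (P Q U : {poly R}).

Lemma size_mul_le P Q a b n :
    (size P <= a.+1)%N -> (size Q <= b.+1)%N -> (a + b <= n)%N ->
  (size (P * Q)%R <= n.+1)%N.
Proof. by move=> sP sQ le_abn; apply: leq_trans (size_polyMleq P Q) _; lia. Qed.

Lemma size_add_le P Q n :
  (size P <= n)%N -> (size Q <= n)%N -> (size (P + Q)%R <= n)%N.
Proof. by move=> sP sQ; apply: leq_trans (size_polyD P Q) _; rewrite geq_max sP. Qed.

Lemma coef_sqr_top U e : (size U <= e.+1)%N -> (U ^+ 2)`_(e + e) = U`_e ^+ 2.
Proof.
move=> sU; have lt_e_ee : (e < (e + e).+1)%N by rewrite ltnS leq_addr.
rewrite !expr2 coefM (bigD1 (Ordinal lt_e_ee)) //=.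
rewrite addnK big1 ?addr0 // => j ne_je.
have {ne_je} : (j : nat) != e by apply: contraNneq ne_je => eq_je; apply/eqP/val_inj.
case: ltngtP => // [lt_je|lt_ej] _.
  by rewrite [U`_(e + e - j)]nth_default ?mulr0 //; apply: leq_trans sU _; lia.
by rewrite nth_default ?mul0r // (leq_trans sU lt_ej).
Qed.

End PolySizes.

Lemma size_sqr_add (R : realDomainType) (U1 U2 : {poly R}) e :
    (size U1 <= e.+1)%N -> (size U2 <= e.+1)%N -> size U1 = e.+1 \/ size U2 = e.+1 ->
  size (U1 ^+ 2 + U2 ^+ 2) = (e + e).+1.
Proof.
move=> sU1 sU2 U_full.
have top_neq0 (U : {poly R}) : size U = e.+1 -> U`_e != 0.
  by move=> sU; have := lead_coef_eq0 U; rewrite lead_coefE sU -size_poly_eq0 sU => ->.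
have coef_top : (U1 ^+ 2 + U2 ^+ 2)`_(e + e) != 0.
  rewrite coefD !coef_sqr_top // paddr_eq0 ?sqr_ge0 // !sqrf_eq0 negb_and.
  by case: U_full => /top_neq0 ->; rewrite ?orbT.
apply/eqP; rewrite eqn_leq ltnNge; apply/andP; split.
  rewrite !expr2; apply: size_add_le.
    exact: (size_mul_le sU1 sU1 (leqnn _)).
  exact: (size_mul_le sU2 sU2 (leqnn _)).
by apply: contraNN coef_top => s_le; rewrite nth_default.
Qed.

Section BoundedBezout.
Variable F : fieldType.
Implicit Types (H : {poly F}).

Lemma Bezout_size_le (P1 P2 : {poly F}) H a b m :
    (size P1 <= a.+1)%N -> size P2 = b.+1 -> coprimep P1 P2 ->
    (size H <= m.+1)%N -> (a + b <= m.+1)%N ->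
  exists X Y : {poly F},
    [/\ (size X <= (m - a).+1)%N, (size Y <= (m - b).+1)%N & H = P1 * X + P2 * Y].
Proof.
move=> sP1 sP2 cop sH le_abm.
have [[x y] /= bezout] := Bezout_eq1_coprimepP _ _ cop.
have P2_neq0 : P2 != 0 by rewrite -size_poly_eq0 sP2.
have [q [X [sX eq_div]]] : exists q X : {poly F}, (size X <= b)%N /\ H * x = q * P2 + X.
  by exists ((H * x) %/ P2), ((H * x) %% P2); rewrite -ltnS -sP2 ltn_modpN0 // -divp_eq.
set Y := H * y + P1 * q.
have eq_H : H = P1 * X + P2 * Y.
  rewrite -[H in LHS]mulr1 -bezout /Y.
  transitivity (P1 * (H * x) + P2 * (H * y)); first by ring.
  by rewrite eq_div; ring.
exists X, Y; split=> //; first by apply: leq_trans sX _; lia.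
have sP1X : (size (P1 * X)%R <= m.+1)%N by apply: leq_trans (size_polyMleq _ _) _; lia.
have sP2Y : (size (P2 * Y)%R <= m.+1)%N.
  have -> : P2 * Y = H - P1 * X by rewrite [in RHS]eq_H addrAC subrr add0r.
  by apply: size_add_le; rewrite ?size_polyN.
have [->|Y_neq0] := eqVneq Y 0; first by rewrite size_poly0.
by move: sP2Y; rewrite size_mul // sP2; set sY := size Y; lia.
Qed.

Lemma Bezout_size_le2 (U1 U2 : {poly F}) H e m :
    (size U1 <= e.+1)%N -> (size U2 <= e.+1)%N -> size U1 = e.+1 \/ size U2 = e.+1 ->
    coprimep U1 U2 -> (size H <= m.+1)%N -> (e + e <= m.+1)%N ->
  exists A B : {poly F},
    [/\ (size A <= (m - e).+1)%N, (size B <= (m - e).+1)%N & H = U1 * A + U2 * B].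
Proof.
move=> sU1 sU2 [sU1_eq|sU2_eq] cop sH le_em; last exact: Bezout_size_le.
rewrite coprimep_sym in cop.
have [B [A [sB sA eq_H]]] := Bezout_size_le sU2 sU1_eq cop sH le_em.
by exists A, B; split=> //; rewrite eq_H addrC.
Qed.

End BoundedBezout.

Lemma sqr_congr_sum_sqr (F : fieldType) (C U1 U2 S Q : {poly F}) k e :
    S = U1 ^+ 2 + U2 ^+ 2 -> size S = (e + e).+1 -> coprimep C S ->
    (size C <= k.+1)%N -> (size U1 <= e.+1)%N -> (size U2 <= e.+1)%N ->
    (size Q <= (k + e).+1)%N ->
  exists T1 T2 Z : {poly F},
    [/\ (size T1 <= k.+1)%N, (size T2 <= k.+1)%N, (size Z <= (e + e + k).+1)%N &
        S * (T1 ^+ 2 + T2 ^+ 2) - Q ^+ 2 = C * Z].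
Proof.
move=> eq_S sS copCS sC sU1 sU2 sQ.
have S_neq0 : S != 0 by rewrite -size_poly_eq0 sS.
have sQU (U : {poly F}) : (size U <= e.+1)%N -> (size (Q * U)%R <= (e + e + k).+1)%N.
  by move=> sU; apply: (size_mul_le sQ sU); lia.
have le_kS : (k + (e + e) <= (e + e + k).+1)%N by lia.
have [X1 [T1 [sX1 sT1 eq_QU1]]] := Bezout_size_le sC sS copCS (sQU _ sU1) le_kS.
have [X2 [T2 [sX2 sT2 eq_QU2]]] := Bezout_size_le sC sS copCS (sQU _ sU2) le_kS.
rewrite addnK in sX1 sX2; rewrite addKn in sT1 sT2.
have eq_ST1 : S * T1 = Q * U1 - C * X1 by rewrite eq_QU1 addrAC subrr add0r.
have eq_ST2 : S * T2 = Q * U2 - C * X2 by rewrite eq_QU2 addrAC subrr add0r.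
pose W := C * (X1 ^+ 2 + X2 ^+ 2) - Q * (U1 * X1 + U2 * X2) *+ 2.
have eq_W : S * (S * (T1 ^+ 2 + T2 ^+ 2) - Q ^+ 2) = C * W.
  transitivity ((S * T1) ^+ 2 + (S * T2) ^+ 2 - S * Q ^+ 2); first by ring.
  by rewrite eq_ST1 eq_ST2 eq_S /W; ring.
have dvd_SW : S %| W.
  have copSC : coprimep S C by rewrite coprimep_sym.
  by rewrite -(Gauss_dvdpr _ copSC) -eq_W dvdp_mulIl.
have sX : (size (X1 ^+ 2 + X2 ^+ 2)%R <= (e + e + (e + e)).+1)%N.
  rewrite !expr2; apply: size_add_le.
    exact: (size_mul_le sX1 sX1 (leqnn _)).
  exact: (size_mul_le sX2 sX2 (leqnn _)).
have sV : (size (U1 * X1 + U2 * X2)%R <= (e + (e + e)).+1)%N.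
  apply: size_add_le.
    exact: (size_mul_le sU1 sX1 (leqnn _)).
  exact: (size_mul_le sU2 sX2 (leqnn _)).
have sW : (size W <= (k + (e + e + (e + e))).+1)%N.
  apply: size_add_le; first exact: (size_mul_le sC sX (leqnn _)).
  by rewrite size_polyN mulr2n; apply: size_add_le; apply: (size_mul_le sQ sV); lia.
exists T1, T2, (W %/ S); split=> //.
  by rewrite size_divp // sS; move: sW; set sw := size W; lia.
by apply: (mulfI S_neq0); rewrite eq_W mulrCA [S * _]mulrC divpK.
Qed.

Lemma sqr_decomposition (F : fieldType) (C U1 U2 S Q : {poly F}) k e :
    S = U1 ^+ 2 + U2 ^+ 2 -> size S = (e + e).+1 -> coprimep C S ->
    (size C <= k.+1)%N -> (size U1 <= e.+1)%N -> (size U2 <= e.+1)%N ->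
    size U1 = e.+1 \/ size U2 = e.+1 -> coprimep U1 U2 -> (size Q <= (k + e).+1)%N ->
  exists A B T1 T2 : {poly F},
    [/\ (size A <= (k + e).+1)%N, (size B <= (k + e).+1)%N,
        (size T1 <= k.+1)%N, (size T2 <= k.+1)%N &
        Q ^+ 2 = C * U1 * A + C * U2 * B + S * (T1 ^+ 2 + T2 ^+ 2)].
Proof.
move=> eq_S sS copCS sC sU1 sU2 U_full copU sQ.
have [T1 [T2 [Z [sT1 sT2 sZ eq_CZ]]]] := sqr_congr_sum_sqr eq_S sS copCS sC sU1 sU2 sQ.
have [A [B [sA sB eq_Z]]] :=
  Bezout_size_le2 sU1 sU2 U_full copU sZ (leqW (leq_addr k (e + e))).
have sAB : (e + e + k - e = k + e)%N by lia.
rewrite sAB in sA sB; exists (- A), (- B), T1, T2; rewrite !size_polyN; split=> //.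
have -> : Q ^+ 2 = S * (T1 ^+ 2 + T2 ^+ 2) - (S * (T1 ^+ 2 + T2 ^+ 2) - Q ^+ 2).
  by ring.
by rewrite eq_CZ eq_Z; ring.
Qed.

Section ImagePlusCone.
Variables (R : realType) (d : nat) (u1 u2 : {mpoly R[2]}).

Definition in_im_add_cone (p : {mpoly R[2]}) : Prop :=
  exists a b, [/\ in_im_A d u1 u2 a, in_cone (in_sigma_ker d u1 u2) b & p = a + b].

Lemma in_im_A0 : in_im_A d u1 u2 0.
Proof. by exists 0, 0; split; rewrite ?dhomog0 // /A_u !mulr0 addr0. Qed.

Lemma in_im_AD a a' :
  in_im_A d u1 u2 a -> in_im_A d u1 u2 a' -> in_im_A d u1 u2 (a + a').
Proof.
move=> [v1 [v2 [hv1 hv2 ->]]] [w1 [w2 [hw1 hw2 ->]]].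
by exists (v1 + w1), (v2 + w2); split; rewrite ?dhomogD // /A_u; ring.
Qed.

Lemma in_cone0 (S : {mpoly R[2]} -> Prop) : in_cone S 0.
Proof. by exists [::]; rewrite big_nil. Qed.

Lemma in_cone_sub (S : {mpoly R[2]} -> Prop) p : S p -> in_cone S p.
Proof.
move=> Sp; exists [:: (1, p)]; rewrite big_seq1 scale1r; split=> // x.
by rewrite mem_seq1 => /eqP ->.
Qed.

Lemma in_coneD (S : {mpoly R[2]} -> Prop) p q :
  in_cone S p -> in_cone S q -> in_cone S (p + q).
Proof.
move=> [s [Ss ->]] [t [St ->]]; exists (s ++ t); rewrite big_cat; split=> // x.
by rewrite mem_cat => /orP[]; [apply: Ss | apply: St].
Qed.

Lemma in_im_add_cone0 : in_im_add_cone 0.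
Proof. by exists 0, 0; split; [exact: in_im_A0 | exact: in_cone0 | rewrite addr0]. Qed.

Lemma in_im_add_coneD p q :
  in_im_add_cone p -> in_im_add_cone q -> in_im_add_cone (p + q).
Proof.
move=> [a [b [ha hb ->]]] [a' [b' [ha' hb' ->]]].
by exists (a + a'), (b + b'); split; [exact: in_im_AD | exact: in_coneD | ring].
Qed.

Lemma in_im_add_cone_sos p :
    (forall q, q \is d.-homog -> in_im_add_cone (q ^+ 2)) ->
  sos_form d p -> in_im_add_cone p.
Proof.
move=> sqr_in [s [s_homog ->]]; elim: s s_homog => [|q s IHs] s_homog.
  by rewrite big_nil; exact: in_im_add_cone0.
rewrite big_cons; apply: in_im_add_coneD; first by apply/sqr_in/s_homog/mem_head.
by apply: IHs => r r_in; apply/s_homog; rewrite in_cons r_in orbT.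
Qed.

End ImagePlusCone.

Lemma sqr_in_im_add_cone0 (R : realType) d (q : {mpoly R[2]}) :
  q \is d.-homog -> in_im_add_cone d 0 0 (q ^+ 2).
Proof.
move=> q_homog; exists 0, (q ^+ 2); split; [exact: in_im_A0 | | by rewrite add0r].
by apply: in_cone_sub; exists q, 0; split; rewrite ?dhomog0 // /A_u; ring.
Qed.

Lemma sigma_ker_cofactors (R : realType) (c v w t : {mpoly R[2]}) k e :
    v \is e.-homog -> w \is e.-homog -> t \is k.-homog ->
  in_sigma_ker (k + e) (c * v) (c * w) ((t * w) ^+ 2 + (t * v) ^+ 2).
Proof.
move=> v_homog w_homog t_homog; exists (t * w), (- (t * v)).
by split; rewrite ?rpredN ?dhomogM // /A_u; ring.
Qed.

Section SquaresInImagePlusCone.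
Variables (R : realType) (k e : nat) (c u1' u2' : {mpoly R[2]}).
Hypotheses (c_homog : c \is k.-homog).
Hypotheses (u1'_homog : u1' \is e.-homog) (u2'_homog : u2' \is e.-homog).
Hypotheses (cop_u' : mcoprime u1' u2') (cop_cS : mcoprime c (u1' ^+ 2 + u2' ^+ 2)).

Lemma dehomog_cofactors_full :
  size (dehomog u1') = e.+1 \/ size (dehomog u2') = e.+1.
Proof.
have [|ne1] := eqVneq (size (dehomog u1')) e.+1; first by left.
have [|ne2] := eqVneq (size (dehomog u2')) e.+1; first by right.
have Xlast_dvd (u : {mpoly R[2]}) : u \is e.-homog -> size (dehomog u) != e.+1 ->
    mdivides 'X_ord_max u.
  move=> u_homog ne; apply: (mdivides_Xlast u_homog).
  by rewrite -ltnS ltn_neqAle ne size_dehomog.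
have [a] := cop_u' (Xlast_dvd _ u1'_homog ne1) (Xlast_dvd _ u2'_homog ne2).
by move/mpolyX_neqC.
Qed.

Lemma sqr_in_im_add_cone q :
  q \is (k + e).-homog -> in_im_add_cone (k + e) (c * u1') (c * u2') (q ^+ 2).
Proof.
move=> q_homog.
have sU1 := size_dehomog u1'_homog; have sU2 := size_dehomog u2'_homog.
have copCS : coprimep (dehomog c) (dehomog u1' ^+ 2 + dehomog u2' ^+ 2).
  have S_homog : u1' ^+ 2 + u2' ^+ 2 \is (e + e).-homog.
    by rewrite !expr2; apply: dhomogD; apply: dhomogM.
  by have := coprimep_dehomog c_homog S_homog cop_cS; rewrite rmorphD !rmorphXn.
have [A [B [T1 [T2 [sA sB sT1 sT2 eq_Q]]]]] :=
  sqr_decomposition (erefl _) (size_sqr_add sU1 sU2 dehomog_cofactors_full) copCS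
    (size_dehomog c_homog) sU1 sU2 dehomog_cofactors_full
    (coprimep_dehomog u1'_homog u2'_homog cop_u') (size_dehomog q_homog).
pose a := homogenize (k + e) A; pose b := homogenize (k + e) B.
pose t1 := homogenize k T1; pose t2 := homogenize k T2.
pose ker t := (t * u2') ^+ 2 + (t * u1') ^+ 2.
exists (A_u (c * u1') (c * u2') a b), (ker t1 + ker t2); split.
- by exists a, b; split; rewrite ?dhomog_homogenize.
- by apply: in_coneD; apply/in_cone_sub/sigma_ker_cofactors; rewrite ?dhomog_homogenize.
apply: (@dehomog_inj _ ((k + e) + (k + e))).
- by rewrite expr2; apply: dhomogM.
- rewrite /A_u /ker !expr2.
  by do ![apply: dhomogD | apply: dhomogM | exact: dhomog_homogenize].
rewrite /A_u /ker !rmorphD !rmorphXn !rmorphM /= !homogenizeK // eq_Q.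
by ring.
Qed.

End SquaresInImagePlusCone.

Unset Implicit Arguments.

Theorem lemma4p3 (R : realType) (d : nat) (u1 u2 c u1' u2' : {mpoly R[2]}) :
  u1 \is d.-homog -> u2 \is d.-homog ->
  is_mgcd c u1 u2 -> u1 = c * u1' -> u2 = c * u2' ->
  mcoprime c (u1' ^+ 2 + u2' ^+ 2) ->
  forall p : {mpoly R[2]}, sos_form d p ->
    exists a b : {mpoly R[2]},
      [/\ in_im_A d u1 u2 a, in_cone (in_sigma_ker d u1 u2) b & p = a + b].
Proof.
move=> u1_homog u2_homog gcd_c eq_u1 eq_u2 cop_cS p p_sos.
apply: (in_im_add_cone_sos _ p_sos) => q q_homog.
have [/andP[/eqP u1_0 /eqP u2_0]|u_neq0] := boolP ((u1 == 0) && (u2 == 0)).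
  by rewrite u1_0 u2_0; exact: sqr_in_im_add_cone0.
subst u1 u2; rewrite negb_and in u_neq0.
have c_neq0 : c != 0 by apply: contraTneq u_neq0 => ->; rewrite !mul0r eqxx.
have [k [e [c_homog u1'_homog u2'_homog d_eq]]] : exists k e,
    [/\ c \is k.-homog, u1' \is e.-homog, u2' \is e.-homog & d = (k + e)%N].
  case/orP: u_neq0 => [cu1_neq0 | cu2_neq0]; first exact: dhomog_split.
  by have [k [e [? ? ? ?]]] := dhomog_split cu2_neq0 u2_homog u1_homog; exists k, e.
subst d; apply: (sqr_in_im_add_cone c_homog u1'_homog u2'_homog _ cop_cS q_homog).
exact: mgcd_cofactors_coprime gcd_c.
Qed.
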